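(* Let $\mathcal{D}$ be a $\{K_3,K_4\}$-decomposition of $K_{18}$ with $\alpha=13$, let $W$ be the set of vertices $x$ with $\alpha_x\ge 2$, and for $i\in\{0,1,2,3\}$ let $t_i$ be the number of copies of $K_3$ in $\mathcal{D}$ having exactly $i$ vertices in $W$. Then $(t_0,t_1,t_2,t_3)\neq(1,1,6,5)$.
   Context: A $\{K_3,K_4\}$-decomposition of $K_v$ is a collection of subgraphs, each isomorphic to $K_3$ or $K_4$, such that every edge of $K_v$ lies in exactly one of them. $\alpha$ is the number of copies of $K_3$ in the decomposition, and for a vertex $x$, $\alpha_x$ is the number of copies of $K_3$ in the decomposition containing $x$. *)

From mathcomp Require Import all_boot.
Set Implicit Arguments. Unset Strict Implicit. Unset Printing Implicit Defensive.

(* A {K3,K4}-decomposition of K_v on vertex set 'I_v: each block (copy of K3 or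
   K4) is represented by its vertex set (a complete subgraph of K_v is
   determined by its vertices); every edge {x,y} (x <> y) lies in exactly one
   block. *)
Definition K34_decomposition (v : nat) (D : {set {set 'I_v}}) : Prop :=
  (forall B, B \in D -> #|B| = 3 \/ #|B| = 4) /\
  (forall x y : 'I_v, x != y ->
     #|[set B in D | (x \in B) && (y \in B)]| = 1).

Definition triangles v (D : {set {set 'I_v}}) : {set {set 'I_v}} :=
  [set B in D | #|B| == 3].

Definition alpha v (D : {set {set 'I_v}}) : nat := #|triangles D|.

Definition alpha_at v (D : {set {set 'I_v}}) (x : 'I_v) : nat :=
  #|[set B in triangles D | x \in B]|.

Definition Wset v (D : {set {set 'I_v}}) : {set 'I_v} :=
  [set x | 2 <= alpha_at D x].

Definition tcount v (D : {set {set 'I_v}}) (i : nat) : nat :=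
  #|[set B in triangles D | #|B :&: Wset D| == i]|.

From mathcomp Require Import all_boot.
From mathcomp Require Import zify.
Set Implicit Arguments. Unset Strict Implicit. Unset Printing Implicit Defensive.

(* Double counting in K_18 gives 6*13 + 12*q = 18*17, so there are q = 19
   copies of K_4.  With w = |W|, b_B = |B :&: W| and the given t_i:
   - counting ordered pairs of distinct vertices of W gives
     42 + sum_{K4} b_B (b_B - 1) = w (w - 1);
   - counting pairs (x, y) with x in W and y <> x gives
     56 + 3 sum_{K4} b_B = 17 w;
   - the 11 triangle incidences outside W fall on distinct vertices
     (alpha_x <= 1 there), so w <= 7.
   The first relation forces w = 7 and b_B <= 1 for every K4, whence
   sum_{K4} b_B <= 19, while the second one then demands 21. *)

Lemma card_set_in (T : finType) (A : {set T}) (P : pred T) :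
  #|[set B in A | P B]| = \sum_(B in A) P B.
Proof.
rewrite -sum1_card big_mkcond [RHS]big_mkcond /=; apply: eq_bigr => B _.
by rewrite inE; case: (B \in A); case: (P B).
Qed.

Lemma exchange_big_incidence (T : finType) (F : {set {set T}}) (S : {set T})
    (G : T -> {set T} -> nat) :
  \sum_(x in S) \sum_(B in F | x \in B) G x B =
  \sum_(B in F) \sum_(x in B :&: S) G x B.
Proof.
under eq_bigr do rewrite big_mkcondr.
rewrite exchange_big /=; apply: eq_bigr => B _.
rewrite big_mkcond [RHS]big_mkcond; apply: eq_bigr => x _.
by rewrite inE; case: (x \in B); case: (x \in S).
Qed.

Lemma sum_cardsD1 (T : finType) (A : {set T}) :
  \sum_(x in A) #|A :\ x| = #|A| * #|A|.-1.
Proof.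
rewrite (eq_bigr (fun _ => #|A|.-1)) ?sum_nat_const // => x xA.
by rewrite (cardsD1 x A) xA.
Qed.

Section PairwiseBalancedDesign.
Variables (T : finType) (D : {set {set T}}).
Hypothesis pair_in_unique_block : forall x y : T, x != y ->
  #|[set B in D | (x \in B) && (y \in B)]| = 1.

Lemma sum_blocks_through x (U : {set T}) :
  \sum_(B in D | x \in B) #|(B :&: U) :\ x| = #|U :\ x|.
Proof.
rewrite -[RHS]sum1_card.
rewrite [RHS](eq_bigr (fun y => \sum_(B in D) ((x \in B) && (y \in B) : nat))).
  rewrite exchange_big /= big_mkcondr /=; apply: eq_bigr => B _.
  case xB: (x \in B); last by rewrite big1.
  rewrite -sum1_card big_mkcond [RHS]big_mkcond /=; apply: eq_bigr => y _.
  by rewrite !inE; case: (y == x); case: (y \in B); case: (y \in U).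
move=> y; rewrite in_setD1 => /andP[yx _].
by rewrite -card_set_in pair_in_unique_block // eq_sym.
Qed.

Lemma sum_blocks_pairs (S U : {set T}) :
  \sum_(B in D) \sum_(x in B :&: S) #|(B :&: U) :\ x| =
  \sum_(x in S) #|U :\ x|.
Proof.
rewrite -exchange_big_incidence; apply: eq_bigr => x _.
exact: sum_blocks_through.
Qed.

Lemma sum_blocks_pairs_within (S : {set T}) :
  \sum_(B in D) #|B :&: S| * #|B :&: S|.-1 = #|S| * #|S|.-1.
Proof.
rewrite -sum_cardsD1 -(sum_blocks_pairs S S).
by apply: eq_bigr => B _; rewrite -sum_cardsD1.
Qed.

Lemma sum_blocks_pairs_from (S : {set T}) :
  \sum_(B in D) #|B :&: S| * #|B|.-1 = #|S| * #|T|.-1.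
Proof.
transitivity (\sum_(x in S) #|[set: T] :\ x|).
  rewrite -sum_blocks_pairs; apply: eq_bigr => B _; rewrite -sum_nat_const.
  by apply: eq_bigr => x; rewrite setIT inE => /andP[xB _]; rewrite (cardsD1 x B) xB.
rewrite -cardsT (eq_bigr (fun _ => #|[set: T]|.-1)) ?sum_nat_const // => x _.
by rewrite (cardsD1 x [set: T]) in_setT.
Qed.

End PairwiseBalancedDesign.

Definition quadruples v (D : {set {set 'I_v}}) : {set {set 'I_v}} :=
  [set B in D | #|B| == 4].

Lemma big_triangles_quadruples v (D : {set {set 'I_v}}) (f : {set 'I_v} -> nat) :
  K34_decomposition D ->
  \sum_(B in D) f B =
  \sum_(B in triangles D) f B + \sum_(B in quadruples D) f B.
Proof.
move=> [blocks _]; rewrite (bigID (fun B : {set 'I_v} => #|B| == 3)) /=.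
congr (_ + _); apply: eq_bigl => B; rewrite !inE //.
by case BD: (B \in D) => //=; case: (blocks B BD) => ->.
Qed.

Lemma card_quadruples v (D : {set {set 'I_v}}) :
  K34_decomposition D -> 6 * alpha D + 12 * #|quadruples D| = v * v.-1.
Proof.
move=> decD; have [_ pairs] := decD.
have := sum_blocks_pairs_within pairs [set: 'I_v].
rewrite cardsT card_ord big_triangles_quadruples // => <-.
rewrite !(mulnC _ #|_|) -!sum_nat_const; congr (_ + _).
  by apply: eq_bigr => B; rewrite setIT inE => /andP[_ /eqP ->].
by apply: eq_bigr => B; rewrite setIT inE => /andP[_ /eqP ->].
Qed.

Lemma sum_triangles_tcount v (D : {set {set 'I_v}}) (F : nat -> nat -> nat) :
  \sum_(B in triangles D) F #|B| #|B :&: Wset D| =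
  \sum_(i < 4) F 3 i * tcount D i.
Proof.
rewrite /tcount; under [RHS]eq_bigr do rewrite card_set_in big_distrr /=.
rewrite exchange_big /=; apply: eq_bigr => B; rewrite inE => /andP[_ /eqP B3].
have lt_meet_4 : #|B :&: Wset D| < 4.
  by rewrite ltnS -B3 subset_leq_card ?subsetIl.
rewrite (bigD1 (Ordinal lt_meet_4)) //= eqxx muln1 B3 big1 ?addn0 // => i.
by rewrite -(inj_eq val_inj) /= eq_sym => /negbTE ->; rewrite muln0.
Qed.

Lemma sum_triangles_quadruples_card v (D : {set {set 'I_v}})
    (F : nat -> nat -> nat) (S : {set 'I_v}) :
  \sum_(B in quadruples D) F #|B| #|B :&: S| =
  \sum_(B in quadruples D) F 4 #|B :&: S|.
Proof. by apply: eq_bigr => B; rewrite inE => /andP[_ /eqP ->]. Qed.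

Lemma sum_alpha_at v (D : {set {set 'I_v}}) (S : {set 'I_v}) :
  \sum_(x in S) alpha_at D x = \sum_(B in triangles D) #|B :&: S|.
Proof.
under [RHS]eq_bigr do rewrite -sum1_card.
rewrite -exchange_big_incidence; apply: eq_bigr => x _.
by rewrite /alpha_at -sum1_card; apply: eq_bigl => B; rewrite inE.
Qed.

Lemma sum_triangles_notin_Wset_leq v (D : {set {set 'I_v}}) :
  \sum_(B in triangles D) (#|B| - #|B :&: Wset D|) <= #|~: Wset D|.
Proof.
rewrite -sum1_card.
rewrite (eq_bigr (fun B => #|B :&: ~: Wset D|)); last first.
  by move=> B _; rewrite -(cardsID (Wset D) B) setDE addKn.
by rewrite -sum_alpha_at leq_sum // => x; rewrite !inE -ltnNge ltnS.
Qed.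

Lemma counting_constraints_inconsistent w q s s2 :
  6 * 13 + 12 * q = 18 * 17 -> 42 + s2 = w * w.-1 -> 56 + 3 * s = 17 * w ->
  11 <= 18 - w -> s <= q + s2 -> False.
Proof. nia. Qed.

Theorem mainTheorem12 (D : {set {set 'I_18}}) :
  K34_decomposition D -> alpha D = 13 ->
  (tcount D 0, tcount D 1, tcount D 2, tcount D 3) <> (1, 1, 6, 5).
Proof.
move=> decD alpha13 [t0 t1 t2 t3]; have [_ pairs] := decD.
have split_sum F : \sum_(B in D) F #|B| #|B :&: Wset D| =
    F 3 0 + F 3 1 + F 3 2 * 6 + F 3 3 * 5 +
    \sum_(B in quadruples D) F 4 #|B :&: Wset D|.
  rewrite big_triangles_quadruples // sum_triangles_quadruples_card.
  by rewrite sum_triangles_tcount !big_ord_recr big_ord0 /= t0 t1 t2 t3 !muln1.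
apply: (@counting_constraints_inconsistent #|Wset D| #|quadruples D|
  (\sum_(B in quadruples D) #|B :&: Wset D|)
  (\sum_(B in quadruples D) #|B :&: Wset D| * #|B :&: Wset D|.-1)).
- by have := card_quadruples decD; rewrite alpha13; apply.
- by rewrite -(sum_blocks_pairs_within pairs) (split_sum (fun _ b => b * b.-1)).
- have := sum_blocks_pairs_from pairs (Wset D).
  rewrite (split_sum (fun k b => b * k.-1)) card_ord /= -big_distrl /=.
  (* [set] merges two syntactically different elaborations of [#|Wset D|]. *)
  by set w := #|Wset D|; lia.
- have := sum_triangles_notin_Wset_leq D; have := cardsC (Wset D).
  by rewrite sum_triangles_tcount !big_ord_recr big_ord0 /= t0 t1 t2 t3 card_ord; lia.
- rewrite -sum1_card -big_split leq_sum // => B _.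
  by case: #|_| => //= n; nia.
Qed.
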